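(* Let $\Gamma$ be a cubic distance-regular graph with at least $10$ vertices and let $(u_{ij})$ be the generators of $C(G_{aut}^+(\Gamma))$. Then $u_{ij}u_{kl}=u_{kl}u_{ij}$ for all vertices $i,j,k,l$ with $d(i,k)=d(j,l)\le2$.
   Context: A connected regular graph $\Gamma=(V,E)$ of diameter $D$ is distance-regular with intersection array $\{b_0,\dots,b_{D-1};c_1,\dots,c_D\}$ if for any vertices $v,w$ with $d(v,w)=i$, exactly $b_i$ neighbors of $w$ are at distance $i+1$ from $v$ and exactly $c_i$ neighbors of $w$ are at distance $i-1$ from $v$ ($d$ the graph distance). Cubic means $3$-regular. $C(G_{aut}^+(\Gamma))$ is the universal unital $C^*$-algebra generated by $u_{ij}$, $i,j\in V=\{1,\dots,n\}$, with relations: (R1) $u_{ij}=u_{ij}^*=u_{ij}^2$; (R2) $\sum_{l} u_{il}=1=\sum_{l} u_{li}$ for all $i$; (R3) $u_{ij}u_{kl}=u_{kl}u_{ij}=0$ whenever exactly one of $(i,k)\in E$, $(j,l)\in E$ holds. *)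

From mathcomp Require Import all_boot.
From Stdlib Require Import Reals.

Set Implicit Arguments.
Unset Strict Implicit.
Unset Printing Implicit Defensive.

Record Cplx := Cpair { Cre : R; Cim : R }.
Definition C0 : Cplx := Cpair 0%R 0%R.
Definition C1 : Cplx := Cpair 1%R 0%R.
Definition Cadd (a b : Cplx) : Cplx := Cpair (Cre a + Cre b)%R (Cim a + Cim b)%R.
Definition Cmul (a b : Cplx) : Cplx :=
  Cpair (Cre a * Cre b - Cim a * Cim b)%R (Cre a * Cim b + Cim a * Cre b)%R.
Definition Cconj (a : Cplx) : Cplx := Cpair (Cre a) (- Cim a)%R.
Definition Cmod (a : Cplx) : R := sqrt (Cre a * Cre a + Cim a * Cim a)%R.

Record CstarAlgebra := {
  ca_car :> Type;
  ca_zero : ca_car;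
  ca_one : ca_car;
  ca_add : ca_car -> ca_car -> ca_car;
  ca_opp : ca_car -> ca_car;
  ca_mul : ca_car -> ca_car -> ca_car;
  ca_scale : Cplx -> ca_car -> ca_car;
  ca_star : ca_car -> ca_car;
  ca_norm : ca_car -> R;
  ca_addA : forall x y z, ca_add x (ca_add y z) = ca_add (ca_add x y) z;
  ca_addC : forall x y, ca_add x y = ca_add y x;
  ca_add0 : forall x, ca_add ca_zero x = x;
  ca_addN : forall x, ca_add (ca_opp x) x = ca_zero;
  ca_scaleA : forall a b x, ca_scale a (ca_scale b x) = ca_scale (Cmul a b) x;
  ca_scale1 : forall x, ca_scale C1 x = x;
  ca_scaleDl : forall a b x, ca_scale (Cadd a b) x = ca_add (ca_scale a x) (ca_scale b x);
  ca_scaleDr : forall a x y, ca_scale a (ca_add x y) = ca_add (ca_scale a x) (ca_scale a y);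
  ca_mulA : forall x y z, ca_mul x (ca_mul y z) = ca_mul (ca_mul x y) z;
  ca_mul1l : forall x, ca_mul ca_one x = x;
  ca_mul1r : forall x, ca_mul x ca_one = x;
  ca_mulDl : forall x y z, ca_mul (ca_add x y) z = ca_add (ca_mul x z) (ca_mul y z);
  ca_mulDr : forall x y z, ca_mul x (ca_add y z) = ca_add (ca_mul x y) (ca_mul x z);
  ca_scale_mull : forall a x y, ca_mul (ca_scale a x) y = ca_scale a (ca_mul x y);
  ca_scale_mulr : forall a x y, ca_mul x (ca_scale a y) = ca_scale a (ca_mul x y);
  ca_starK : forall x, ca_star (ca_star x) = x;
  ca_starD : forall x y, ca_star (ca_add x y) = ca_add (ca_star x) (ca_star y);
  ca_starM : forall x y, ca_star (ca_mul x y) = ca_mul (ca_star y) (ca_star x);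
  ca_starZ : forall a x, ca_star (ca_scale a x) = ca_scale (Cconj a) (ca_star x);
  ca_norm_ge0 : forall x, (0 <= ca_norm x)%R;
  ca_norm_eq0 : forall x, ca_norm x = 0%R -> x = ca_zero;
  ca_norm_triangle : forall x y, (ca_norm (ca_add x y) <= ca_norm x + ca_norm y)%R;
  ca_normZ : forall a x, ca_norm (ca_scale a x) = (Cmod a * ca_norm x)%R;
  ca_normM : forall x y, (ca_norm (ca_mul x y) <= ca_norm x * ca_norm y)%R;
  ca_cstar : forall x, ca_norm (ca_mul (ca_star x) x) = (ca_norm x * ca_norm x)%R;
  ca_complete : forall s : nat -> ca_car,
    (forall eps : R, (0 < eps)%R -> exists N : nat, forall m n : nat,
        (N <= m)%N -> (N <= n)%N -> (ca_norm (ca_add (s m) (ca_opp (s n))) < eps)%R) ->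
    exists x : ca_car, forall eps : R, (0 < eps)%R -> exists N : nat, forall n : nat,
        (N <= n)%N -> (ca_norm (ca_add (s n) (ca_opp x)) < eps)%R
}.

Arguments ca_zero {c}. Arguments ca_one {c}. Arguments ca_add {c}.
Arguments ca_mul {c}. Arguments ca_star {c}.

Section Graph.
Variables (V : finType) (e : rel V).

Fixpoint within (n : nat) (x y : V) : bool :=
  if n is n'.+1 then (x == y) || [exists z, e x z && within n' z y] else x == y.

(* graph distance: least n with a walk of length n from x to y
   (equals #|V| if y is unreachable; irrelevant for connected graphs) *)
Definition gdist (x y : V) : nat := find (fun n => within n x y) (iota 0 #|V|).

Definition simple_graph : Prop := symmetric e /\ irreflexive e.
Definition gconnected : Prop := forall x y : V, connect e x y.
Definition cubic : Prop := forall v : V, #|[set w | e v w]| = 3.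

(* intersection numbers b_i, c_i depend only on i = d(v,w) *)
Definition distance_regular : Prop :=
  gconnected /\
  (exists k : nat, forall v : V, #|[set w | e v w]| = k) /\
  exists b c : nat -> nat, forall v w : V,
    #|[set z | e w z && (gdist v z == (gdist v w).+1)]| = b (gdist v w) /\
    #|[set z | e w z && ((gdist v z).+1 == gdist v w)]| = c (gdist v w).
End Graph.

Definition qaut_relations (V : finType) (e : rel V) (A : CstarAlgebra)
  (u : V -> V -> A) : Prop :=
  (forall i j, u i j = ca_star (u i j) /\ u i j = ca_mul (u i j) (u i j)) /\
  (forall i, \big[ca_add/ca_zero]_(l : V) u i l = ca_one /\
             \big[ca_add/ca_zero]_(l : V) u l i = ca_one) /\
  (forall i j k l, e i k != e j l ->
     ca_mul (u i j) (u k l) = ca_zero /\ ca_mul (u k l) (u i j) = ca_zero).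

From HB Require Import structures.
From Pilot Require Import Defs.
From Stdlib Require Import Reals.
From mathcomp Require Import all_boot.

(* A cubic distance-regular graph on at least 10 vertices has neither triangles
   nor quadrangles: the constancy of the intersection numbers turns a triangle
   into a K4 component, and two vertices with two common neighbours force
   c_2 = 2 or 3, that is a cube or K_{3,3} component.  Without quadrangles, R2
   and R3 alone give u_ij u_il = 0 for j <> l.  For self-adjoint a, b the
   identity ab = aba forces ab = (ab)^* = ba, and when d(i,k) = d(j,l) is 1 or 2
   one gets u_ij u_kl = u_ij u_kl u_ij by inserting row and column sums of u
   along neighbours of i, k, j, l: R3 kills all terms but those along edges, and
   quadrangle-freeness collapses these sums to single terms. *)

Set Implicit Arguments.
Unset Strict Implicit.
Unset Printing Implicit Defensive.

Local Notation "x \* y" := (ca_mul x y) (at level 40, left associativity).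
Local Notation "x \+ y" := (ca_add x y) (at level 50, left associativity).

Section CstarAlgebraFacts.
Variable A : CstarAlgebra.
Implicit Types x y z : A.

Lemma ca_addr0 x : x \+ ca_zero = x.
Proof. by rewrite ca_addC ca_add0. Qed.

Lemma ca_addI x : injective (ca_add x).
Proof.
move=> y z /(f_equal (ca_add (ca_opp x))).
by rewrite !ca_addA ca_addN !ca_add0.
Qed.

Lemma ca_mulr0 x : x \* ca_zero = ca_zero.
Proof. by apply: (@ca_addI (x \* ca_zero)); rewrite ca_addr0 -ca_mulDr ca_add0. Qed.

Lemma ca_mul0r x : ca_zero \* x = ca_zero.
Proof. by apply: (@ca_addI (ca_zero \* x)); rewrite ca_addr0 -ca_mulDl ca_add0. Qed.

Lemma ca_scaler0 a : ca_scale a (ca_zero : A) = ca_zero.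
Proof. by apply: (@ca_addI (ca_scale a ca_zero)); rewrite ca_addr0 -ca_scaleDr ca_add0. Qed.

Lemma ca_triple_eq0 x : x = x \+ x \+ x -> x = ca_zero.
Proof.
rewrite -{1}[x]ca_addr0 -ca_addA => /ca_addI x2.
have half2 : Cmul (Cpair (Rinv (Rplus R1 R1)) R0) (Cadd Defs.C1 Defs.C1) = Defs.C1.
  by rewrite /Cmul /Cadd /Defs.C1 /=; f_equal; field.
by rewrite -(ca_scale1 x) -half2 -ca_scaleA ca_scaleDl ca_scale1 -x2 ca_scaler0.
Qed.

HB.instance Definition _ := Monoid.isComLaw.Build (ca_car A) ca_zero (@ca_add A)
  (@ca_addA A) (@ca_addC A) (@ca_add0 A).

Lemma ca_mulr_sumr x I (r : seq I) (P : pred I) (F : I -> A) :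
  x \* \big[ca_add/ca_zero]_(i <- r | P i) F i =
  \big[ca_add/ca_zero]_(i <- r | P i) (x \* F i).
Proof. by apply: (big_endo (ca_mul x)); [move=> y z; rewrite ca_mulDr | rewrite ca_mulr0]. Qed.

Lemma ca_mulr_suml x I (r : seq I) (P : pred I) (F : I -> A) :
  (\big[ca_add/ca_zero]_(i <- r | P i) F i) \* x =
  \big[ca_add/ca_zero]_(i <- r | P i) (F i \* x).
Proof. by apply: (big_endo (ca_mul^~ x)); [move=> y z; rewrite ca_mulDl | rewrite ca_mul0r]. Qed.

Lemma ca_mulAC x y z : y \* z = z \* y -> x \* y \* z = x \* z \* y.
Proof. by move=> yz; rewrite -!ca_mulA yz. Qed.

Lemma ca_mulA_eq0 x y z : y \* z = ca_zero -> x \* y \* z = ca_zero.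
Proof. by move=> yz; rewrite -ca_mulA yz ca_mulr0. Qed.

(* [b a = (a b)^*] and [a b a] is self-adjoint. *)
Lemma ca_selfadj_comm x y : ca_star x = x -> ca_star y = y ->
  x \* y = x \* y \* x -> x \* y = y \* x.
Proof.
move=> sx sy xyx; have yx : y \* x = ca_star (x \* y) by rewrite ca_starM sx sy.
by rewrite yx xyx !ca_starM sx sy ca_mulA -xyx.
Qed.

End CstarAlgebraFacts.

Lemma cards3 (T : finType) (a b c : T) :
  a != b -> a != c -> b != c -> #|[set a; b; c]| = 3.
Proof.
move=> ab ac bc; rewrite [[set a; b; c]]setUC cardsU1 cards2 ab !inE.
by rewrite negb_or eq_sym ac eq_sym bc.
Qed.

Section Cubic.
Variables (V : finType) (e : rel V).
Hypothesis e_cubic : cubic e.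

Lemma exists_other_nbr x a : exists2 y, e x y & y != a.
Proof.
have : 0 < #|[set w | e x w] :\ a|.
  by rewrite -(ltn_add2l (a \in [set w | e x w])) -cardsD1 e_cubic addn0; case: (_ \in _).
by case/card_gt0P => y; rewrite !inE => /andP[ya exy]; exists y.
Qed.

Lemma exists_third_nbr x a b : e x a -> e x b -> a != b ->
  exists c, [/\ e x c, c != a & c != b].
Proof.
move=> exa exb ab.
have : 0 < #|[set w | e x w] :\: [set a; b]|.
  rewrite cardsD e_cubic.
  have -> : [set w | e x w] :&: [set a; b] = [set a; b].
    by apply/setIidPr/subsetP=> w; rewrite !inE => /orP[]/eqP->.
  by rewrite cards2 ab.
case/card_gt0P=> c; rewrite !inE negb_or => /andP[/andP[ca cb] exc].
by exists c.
Qed.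

Lemma exists_nbr3 x :
  exists a b c, [/\ e x a, e x b, e x c & [/\ a != b, a != c & b != c]].
Proof.
have [a exa _] := exists_other_nbr x x; have [b exb ba] := exists_other_nbr x a.
have [c [exc cb ca]] := exists_third_nbr exb exa ba.
by exists a, b, c; rewrite eq_sym ba eq_sym ca eq_sym cb.
Qed.

Section ThreeNbrs.
Variables (x a b c : V).
Hypotheses (exa : e x a) (exb : e x b) (exc : e x c).
Hypotheses (ab : a != b) (ac : a != c) (bc : b != c).

Lemma nbr_cases z : e x z -> [|| z == a, z == b | z == c].
Proof.
move=> exz; have sub : [set a; b; c] \subset [set w | e x w].
  by apply/subsetP=> w; rewrite !inE => /orP[/orP[]|]/eqP->.
have := subset_cardP _ sub; rewrite cards3 // e_cubic => /(_ erefl) /(_ z).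
by rewrite !inE exz orbA => ->.
Qed.

Lemma big_nbr3 R (idx : R) (op : Monoid.com_law idx) (F : V -> R) :
  \big[op/idx]_(w | e x w) F w = op (F a) (op (F b) (F c)).
Proof.
rewrite (bigD1 a) // (bigD1 b) /= ?exb 1?eq_sym // (bigD1 c) /= ?exc.
  rewrite big_pred0 ?Monoid.mulm1 // => w.
  apply/negP => /andP[/andP[/andP[/nbr_cases exw wa] wb] wc].
  by case/or3P: exw => /eqP wabc; rewrite wabc eqxx ?andbF in wa wb wc.
by rewrite eq_sym ac eq_sym bc.
Qed.

End ThreeNbrs.

End Cubic.

Definition quadrangle_free (V : finType) (e : rel V) : Prop :=
  forall x y z z', x != y -> e x z -> e y z -> e x z' -> e y z' -> z = z'.

Lemma qaut_relations_tr (V : finType) (e : rel V) (A : CstarAlgebra) (u : V -> V -> A) :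
  qaut_relations e u -> qaut_relations e (fun i j => u j i).
Proof.
case=> [R1 [R2 R3]]; split=> [i j | ]; first exact: R1.
by split=> [i | i j k l]; [case: (R2 i) | rewrite eq_sym; apply: R3].
Qed.

Section QuantumAutomorphisms.
Variables (V : finType) (e : rel V) (A : CstarAlgebra).
Hypotheses (e_sym : symmetric e) (e_cubic : cubic e).
Hypothesis e_quad : quadrangle_free e.

Section Relations.
Variable u : V -> V -> A.
Hypothesis uR : qaut_relations e u.

Lemma u_selfadj i j : ca_star (u i j) = u i j.
Proof. by case: uR => [R1 _]; case: (R1 i j). Qed.

Lemma u_row_sum i : \big[ca_add/ca_zero]_l u i l = ca_one.
Proof. by case: uR => _ [R2 _]; case: (R2 i). Qed.

Lemma u_col_sum j : \big[ca_add/ca_zero]_l u l j = ca_one.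
Proof. by case: uR => _ [R2 _]; case: (R2 j). Qed.

Lemma u_mul_eq0 i j k l : e i k != e j l -> u i j \* u k l = ca_zero.
Proof. by case: uR => _ [_ R3] /R3 []. Qed.

Lemma u_expand_row i j p : e i p ->
  u i j = \big[ca_add/ca_zero]_(b | e j b) (u i j \* u p b).
Proof.
move=> eip; rewrite -{1}[u i j]ca_mul1r -(u_row_sum p) ca_mulr_sumr [RHS]big_mkcond /=.
by apply: eq_bigr => b _; case: ifPn => // nejb; rewrite u_mul_eq0 // eip.
Qed.

Lemma u_expand_col i j m : e j m ->
  u i j = \big[ca_add/ca_zero]_(b | e i b) (u i j \* u b m).
Proof.
move=> ejm; rewrite -{1}[u i j]ca_mul1r -(u_col_sum m) ca_mulr_sumr [RHS]big_mkcond /=.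
by apply: eq_bigr => b _; case: ifPn => // neib; rewrite u_mul_eq0 // ejm; case: (e i b) neib.
Qed.

(* Insert the row sum of [p]: R3 keeps only the common neighbours of [j] and [l],
   and [q] is the only one. *)
Lemma u_mul_midpoint i j k l p q : j != l -> e i p -> e p k -> e j q -> e q l ->
  u i j \* u k l = u i j \* u p q \* u k l.
Proof.
move=> jl eip epk ejq eql; rewrite {1}(u_expand_row j eip) ca_mulr_suml.
rewrite (bigD1 q) //= big1 ?ca_addr0 // => b /andP[ejb bq].
rewrite -ca_mulA u_mul_eq0 ?ca_mulr0 // epk; apply: contra bq => ebl.
by apply/eqP; apply: e_quad jl ejb _ ejq _; rewrite e_sym.
Qed.

(* If [j] and [l] have a common neighbour [m], expanding along column [m] shows
   [u i j * u i l] to be three times itself; otherwise a row expansion kills it. *)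
Lemma u_row_orth i j l : j != l -> u i j \* u i l = ca_zero.
Proof.
move=> jl; have [k1 [k2 [k3 [e1 e2 e3 [k12 k13 k23]]]]] := exists_nbr3 e_cubic i.
case: (pickP (fun m => e j m && e m l)) => [m /andP[ejm eml] | no_mid].
  apply: ca_triple_eq0; set x := u i j \* u i l.
  have x_mid k : e i k -> u i j \* u k m \* u i l = x.
    by move=> eik; rewrite /x (u_mul_midpoint jl eik _ ejm eml) // e_sym.
  rewrite {1}/x {1}(u_expand_col i ejm) ca_mulr_suml (big_nbr3 e_cubic e1 e2 e3) //.
  by rewrite !x_mid //; apply: ca_addA.
rewrite {1}(u_expand_row j e1) ca_mulr_suml big1 // => b ejb.
rewrite -ca_mulA u_mul_eq0 ?ca_mulr0 // e_sym e1.
by have := no_mid b; rewrite /= ejb /= => ->.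
Qed.

End Relations.

Section Commutation.
Variable u : V -> V -> A.
Hypothesis uR : qaut_relations e u.

Lemma u_col_orth i j k : i != k -> u i j \* u k j = ca_zero.
Proof. exact: (u_row_orth (qaut_relations_tr uR)). Qed.

(* Expanding [u k l] along row [i], only the [j]-term survives: for [a <> j] the
   midpoint lemma gives [u i j * u k l * u i a = u i j * u i a = 0]. *)
Lemma u_comm_adj i j k l : e i k -> e j l -> u i j \* u k l = u k l \* u i j.
Proof.
move=> eik ejl; have eki : e k i by rewrite e_sym.
apply: ca_selfadj_comm; try exact: u_selfadj.
rewrite {1}(u_expand_row uR l eki) ca_mulr_sumr (bigD1 j) /=; last by rewrite e_sym.
rewrite big1 ?ca_addr0 ?ca_mulA // => a /andP[ela aj].
have ja : j != a by rewrite eq_sym.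
by rewrite ca_mulA -(u_mul_midpoint uR ja eik eki ejl ela) (u_row_orth uR).
Qed.

Section DistanceTwo.
Variables (i j k l p q : V).
Hypotheses (ik : i != k) (jl : j != l).
Hypotheses (eip : e i p) (epk : e p k) (ejq : e j q) (eql : e q l).

Let epi : e p i. Proof. by rewrite e_sym. Qed.
Let ekp : e k p. Proof. by rewrite e_sym. Qed.
Let elq : e l q. Proof. by rewrite e_sym. Qed.
Let eqj : e q j. Proof. by rewrite e_sym. Qed.

Let comm_ij_pq : u i j \* u p q = u p q \* u i j. Proof. exact: u_comm_adj. Qed.
Let comm_kl_pq : u k l \* u p q = u p q \* u k l. Proof. exact: u_comm_adj. Qed.
Let midpoint_pq : u i j \* u k l = u i j \* u p q \* u k l.
Proof. exact: u_mul_midpoint. Qed.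

(* Expand the first [u p q] in [u i j * u p q * u i a * u p q] along column [l]
   (over the neighbours [i], [k], [r] of [p]) and along row [r] (over the
   neighbours [j], [l], [a] of [q]); comparing the two expansions kills the
   [k]-term, which is the left-hand side. *)
Lemma u_dist2_mul_eq0 a : e q a -> a != j -> a != l ->
  u i j \* u k l \* u i a = ca_zero.
Proof.
move=> eqa aj al; have eaq : e a q by rewrite e_sym.
have comm_ia_pq : u i a \* u p q = u p q \* u i a by exact: u_comm_adj.
have [r [epr ri rk]] := exists_third_nbr e_cubic epi epk ik.
have [ir kr] : i != r /\ k != r by split; rewrite eq_sym.
have lhsE : u i j \* u k l \* u i a = u i j \* u p q \* u k l \* u i a \* u p q.
  by rewrite -midpoint_pq (ca_mulAC _ comm_ia_pq) (ca_mulAC _ comm_kl_pq) -midpoint_pq.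
have expand_col : u i j \* u p q \* u i a \* u p q =
    u i j \* u p q \* u k l \* u i a \* u p q \+ u i j \* u p q \* u r l \* u i a \* u p q.
  rewrite {1}(u_expand_col uR p eql) ca_mulr_sumr !ca_mulr_suml.
  rewrite (big_nbr3 e_cubic epi epk epr ik ir kr) /= !ca_mulA.
  by rewrite comm_ij_pq (ca_mulA_eq0 _ (u_row_orth uR i jl)) !ca_mul0r ca_add0.
have expand_row : u i j \* u p q \* u i a \* u p q = u i j \* u p q \* u r l \* u i a \* u p q.
  rewrite {1}(u_expand_row uR q epr) ca_mulr_sumr !ca_mulr_suml.
  rewrite (big_nbr3 e_cubic eqj eql eqa jl _ _) 1?eq_sym // /= !ca_mulA.
  rewrite comm_ij_pq (ca_mulA_eq0 _ (u_col_orth j ir)) (ca_mulA_eq0 _ (u_col_orth a ri)).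
  by rewrite !ca_mul0r ca_add0 ca_addr0.
rewrite lhsE; apply: (@ca_addI _ (u i j \* u p q \* u r l \* u i a \* u p q)).
by rewrite ca_addr0 ca_addC -expand_col expand_row.
Qed.

Lemma u_comm_dist2 : u i j \* u k l = u k l \* u i j.
Proof.
have [a [eqa aj al]] := exists_third_nbr e_cubic eqj eql jl.
have absorb_pq : u i j \* u k l = u i j \* u k l \* u p q.
  by rewrite {1}midpoint_pq (ca_mulAC _ (esym comm_kl_pq)).
apply: ca_selfadj_comm; try exact: u_selfadj.
rewrite {1}absorb_pq {1}(u_expand_row uR q epi) ca_mulr_sumr.
rewrite (big_nbr3 e_cubic eqj eql eqa jl _ _) 1?eq_sym // /= !ca_mulA -absorb_pq.
have ki : k != i by rewrite eq_sym.
by rewrite (ca_mulA_eq0 _ (u_col_orth l ki)) (u_dist2_mul_eq0 eqa aj al) ca_add0 ca_addr0.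
Qed.

End DistanceTwo.

End Commutation.

End QuantumAutomorphisms.

Section Distance.
Variables (V : finType) (e : rel V).
Hypothesis e_irr : irreflexive e.

Lemma within_leq n m x y : n <= m -> within e n x y -> within e m x y.
Proof.
elim: n m x => [|n IH] [|m] x //= nm; first by move=> ->.
case/orP=> [-> // | /existsP[z /andP[exz wz]]].
by apply/orP; right; apply/existsP; exists z; rewrite exz (IH m).
Qed.

Lemma gdist_leq m x y : m < #|V| -> (gdist e x y <= m) = within e m x y.
Proof.
move=> mV; rewrite /gdist; apply/idP/idP => [le_m | w_m].
  have has_w : has (fun n => within e n x y) (iota 0 #|V|).
    by rewrite has_find size_iota (leq_ltn_trans le_m).
  have := nth_find 0 has_w; rewrite nth_iota ?add0n; first exact: within_leq.
  exact: leq_ltn_trans le_m mV.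
rewrite leqNgt; apply/negP => lt_m.
by have := before_find 0 lt_m; rewrite nth_iota // add0n w_m.
Qed.

Lemma within1E x y : within e 1 x y = (x == y) || e x y.
Proof.
congr (_ || _); apply/existsP/idP => [[z /andP[exz /eqP <-]] // | exy].
by exists y; rewrite exy eqxx.
Qed.

Hypothesis V_gt2 : 2 < #|V|.

Lemma gdist_eq0 x y : gdist e x y = 0 -> x = y.
Proof.
by move=> d0; apply/eqP; rewrite -[x == y]/(within e 0 x y) -gdist_leq ?d0 // (ltn_trans _ V_gt2).
Qed.

Lemma gdist_eqS m x y : m.+1 < #|V| ->
  (gdist e x y == m.+1) = within e m.+1 x y && ~~ within e m x y.
Proof. by move=> mV; rewrite eqn_leq ltnNge !gdist_leq ?(ltnW mV). Qed.

Lemma gdist_eq1 x y : (gdist e x y == 1) = e x y.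
Proof.
rewrite gdist_eqS ?(ltnW V_gt2) // within1E /=.
case: eqP => [-> | _]; first by rewrite e_irr.
by rewrite andbT.
Qed.

Lemma gdist_eq2 x y :
  (gdist e x y == 2) = [&& x != y, ~~ e x y & [exists z, e x z && e z y]].
Proof.
rewrite gdist_eqS ?V_gt2 // within1E /=; case: eqP => //= _.
case exy: (e x y); rewrite ?andbF //= andbT.
apply/existsP/existsP => [[z /andP[exz wzy]] | [z /andP[exz ezy]]]; exists z.
  case/orP: wzy => [/eqP zy | /existsP[t /andP[ezt /eqP <-]]]; last by rewrite exz.
  by rewrite -zy exz in exy.
by rewrite exz; apply/orP; right; apply/existsP; exists y; rewrite ezy eqxx.
Qed.

End Distance.

Definition common_nbrs (V : finType) (e : rel V) (v w : V) : {set V} :=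
  [set z | e v z && e w z].

Section CubicDistanceRegular.
Variables (V : finType) (e : rel V).
Hypotheses (e_sym : symmetric e) (e_irr : irreflexive e) (e_cubic : cubic e).
Hypothesis e_conn : gconnected e.
Hypothesis V_ge10 : 10 <= #|V|.
Variables b c : nat -> nat.
Hypothesis e_drg : forall v w : V,
  #|[set z | e w z && (gdist e v z == (gdist e v w).+1)]| = b (gdist e v w) /\
  #|[set z | e w z && ((gdist e v z).+1 == gdist e v w)]| = c (gdist e v w).

Let V_gt2 : 2 < #|V|. Proof. exact: leq_trans V_ge10. Qed.

Lemma adj_neq x y : e x y -> x != y.
Proof. by apply: contraTneq => ->; rewrite e_irr. Qed.

Lemma card_le_nbr_closed (s : seq V) v : v \in s ->
  all (fun a => [forall z, e a z ==> (z \in s)]) s -> #|V| <= size s.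
Proof.
move=> vs /allP closed; apply: leq_trans (card_size s); apply: subset_leq_card.
apply/subsetP => w _; have /connectP[p pth ->] := e_conn v w.
elim: p v vs pth => //= a p IH v vs /andP[eva pth]; apply: IH pth.
exact: implyP (forallP (closed v vs) a) eva.
Qed.

Lemma nbrs_in_seq (s : seq V) x a1 a2 a3 : e x a1 -> e x a2 -> e x a3 ->
  a1 != a2 -> a1 != a3 -> a2 != a3 -> a1 \in s -> a2 \in s -> a3 \in s ->
  [forall z, e x z ==> (z \in s)].
Proof.
move=> e1 e2 e3 d12 d13 d23 s1 s2 s3; apply/forallP => z; apply/implyP => exz.
by case/or3P: (nbr_cases e_cubic e1 e2 e3 d12 d13 d23 exz) => /eqP ->.
Qed.

Lemma card_common_nbrs_edge v w : e v w -> #|common_nbrs e v w| + b 1 = 2.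
Proof.
move=> evw; have [bvw _] := e_drg v w.
have /eqP d1 : gdist e v w == 1 by rewrite gdist_eq1.
have := cardsID [set z | (z == v) || e v z] [set z | e w z]; rewrite e_cubic.
have -> : [set z | e w z] :&: [set z | (z == v) || e v z] = v |: common_nbrs e v w.
  apply/setP => z; rewrite !inE; case: eqP => [-> | _] /=; first by rewrite e_sym evw.
  by rewrite andbC.
have -> : [set z | e w z] :\: [set z | (z == v) || e v z] =
    [set z | e w z && (gdist e v z == (gdist e v w).+1)].
  apply/setP => z; rewrite !inE d1 gdist_eq2 // negb_or eq_sym andbC.
  case ewz: (e w z); rewrite //=.
  suff -> : [exists t, e v t && e t z] by rewrite andbT.
  by apply/existsP; exists w; rewrite evw.
by rewrite bvw d1 cardsU1 !inE e_irr add1n addSn => -[].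
Qed.

Lemma card_common_nbrs_nbr3 x y z t : e x y -> e x z -> e x t ->
  y != z -> y != t -> z != t -> #|common_nbrs e x y| = e y z + e y t.
Proof.
move=> exy exz ext yz yt zt; rewrite -sum1dep_card big_mkcondr /=.
rewrite (big_nbr3 e_cubic exy exz ext yz yt zt) /= e_irr.
by case: (e y z); case: (e y t).
Qed.

(* Every edge lies in [2 - b 1] triangles; for the three neighbours [y], [z], [t]
   of [x] this forces [y], [z], [t] to be pairwise adjacent, a K4 component. *)
Lemma no_triangle x y z : e x y -> e y z -> ~~ e x z.
Proof.
move=> exy eyz; apply/negP => exz; have yz := adj_neq eyz.
have [t [ext ty tz]] := exists_third_nbr e_cubic exy exz yz.
have [yt zt] : y != t /\ z != t by split; rewrite eq_sym.
have a1 w : e x w -> #|common_nbrs e x w| = 2 - b 1.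
  by move/card_common_nbrs_edge => <-; rewrite addnK.
have := a1 _ exy; have := a1 _ exz; have := a1 _ ext.
have zy : z != y by rewrite eq_sym.
rewrite (card_common_nbrs_nbr3 exy exz ext yz yt zt) (card_common_nbrs_nbr3 exz exy ext zy zt yt).
rewrite (card_common_nbrs_nbr3 ext exy exz ty tz yz) !(e_sym t) (e_sym z y) eyz.
case ezt: (e z t); case eyt: (e y t) => // <-; try by move/eqP.
move=> _ _; have [xy xz xt] := And3 (adj_neq exy) (adj_neq exz) (adj_neq ext).
have [eyx ezx ezy] : [/\ e y x, e z x & e z y] by split; rewrite e_sym.
have [etx ety etz] : [/\ e t x, e t y & e t z] by split; rewrite e_sym.
suff : #|V| <= size [:: x; y; z; t] by rewrite leqNgt (leq_trans _ V_ge10).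
apply: (card_le_nbr_closed (v := x)); first by rewrite inE eqxx.
rewrite /= !andbT; apply/and4P; split.
- by apply: (nbrs_in_seq exy exz ext); rewrite ?inE ?eqxx ?orbT.
- by apply: (nbrs_in_seq eyx eyz eyt); rewrite ?inE ?eqxx ?orbT.
- by apply: (nbrs_in_seq ezx ezy ezt); rewrite ?inE ?eqxx ?orbT.
- by apply: (nbrs_in_seq etx ety etz); rewrite ?inE ?eqxx ?orbT.
Qed.

Lemma card_common_nbrs_dist2 v w m : v != w -> ~~ e v w -> e v m -> e m w ->
  #|common_nbrs e v w| = c 2.
Proof.
move=> vw nvw evm emw; have [_ cvw] := e_drg v w.
have /eqP d2 : gdist e v w == 2.
  by rewrite gdist_eq2 // vw nvw; apply/existsP; exists m; rewrite evm.
by rewrite -d2 -cvw; apply: eq_card => z; rewrite !inE d2 eqSS gdist_eq1 // andbC.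
Qed.

Lemma exists_other_common_nbr v w m : 1 < c 2 -> v != w -> ~~ e v w -> e v m -> e m w ->
  exists y, [/\ y != m, e v y & e w y].
Proof.
move=> c2_gt1 vw nvw evm emw; move: c2_gt1; rewrite -(card_common_nbrs_dist2 vw nvw evm emw).
case/card_gt1P => y1 [y2 []]; rewrite !inE => /andP[evy1 ewy1] /andP[evy2 ewy2] y12.
by case: (eqVneq y1 m) => [y1m | y1m]; [exists y2; rewrite -y1m eq_sym | exists y1].
Qed.

Lemma adj_remaining_nbr y1 y2 m n w : 1 < c 2 -> y1 != y2 -> e y1 m -> e m y2 ->
  e y1 n -> e y1 w -> m != n -> m != w -> n != w -> ~~ e n y2 -> e y2 w.
Proof.
move=> c2_gt1 y12 ey1m emy2 ey1n ey1w mn mw nw nny2.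
have [s [sm ey1s ey2s]] := exists_other_common_nbr c2_gt1 y12 (no_triangle ey1m emy2) ey1m emy2.
case/or3P: (nbr_cases e_cubic ey1m ey1n ey1w mn mw nw ey1s) => /eqP s_eq.
- by rewrite s_eq eqxx in sm.
- by move: nny2; rewrite -s_eq e_sym ey2s.
- by rewrite -s_eq.
Qed.

Lemma c2_le2_nadj v y a1 a2 a3 : c 2 <= 2 -> y != v ->
  e v a1 -> e v a2 -> e v a3 -> a1 != a2 -> a1 != a3 -> a2 != a3 ->
  e a1 y -> e a2 y -> ~~ e a3 y.
Proof.
move=> c2_le2 yv e1 e2 e3 d12 d13 d23 f1 f2; apply/negP => f3.
have vy : v != y by rewrite eq_sym.
move: c2_le2; rewrite -(card_common_nbrs_dist2 vy (no_triangle e1 f1) e1 f1) leqNgt.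
move/negP; apply; rewrite -(cards3 d12 d13 d23); apply/subset_leq_card/subsetP => z.
by rewrite /common_nbrs !inE => /orP[/orP[]|] /eqP ->; rewrite (e_sym y) ?e1 ?e2 ?e3 ?f1 ?f2 ?f3.
Qed.

(* Otherwise the graph would be the cube. *)
Lemma c2_neq2 : c 2 != 2.
Proof.
apply/eqP => c22; have [c2_gt1 c2_le2] : 1 < c 2 /\ c 2 <= 2 by rewrite c22.
have /card_gt0P [v _] : 0 < #|V| by rewrite (ltn_trans _ V_gt2).
have [a [b' [d [eva evb evd [ab ad bd]]]]] := exists_nbr3 e_cubic v.
have [ba da db] : [/\ b' != a, d != a & d != b'] by split; rewrite eq_sym.
have [eav ebv edv] : [/\ e a v, e b' v & e d v] by split; rewrite e_sym.
have [y1 [y1v eay1 eby1]] := exists_other_common_nbr c2_gt1 ab (no_triangle eav evb) eav evb.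
have [y2 [y2v eay2 edy2]] := exists_other_common_nbr c2_gt1 ad (no_triangle eav evd) eav evd.
have [y3 [y3v eby3 edy3]] := exists_other_common_nbr c2_gt1 bd (no_triangle ebv evd) ebv evd.
have ndy1 := c2_le2_nadj c2_le2 y1v eva evb evd ab ad bd eay1 eby1.
have nby2 := c2_le2_nadj c2_le2 y2v eva evd evb ad ab db eay2 edy2.
have nay3 := c2_le2_nadj c2_le2 y3v evb evd eva bd ba da eby3 edy3.
have y12 : y1 != y2 by apply: contraNneq ndy1 => ->.
have y13 : y1 != y3 by apply: contraNneq ndy1 => ->.
have y23 : y2 != y3 by apply: contraNneq nby2 => ->.
have [vy1 vy2 vy3] : [/\ v != y1, v != y2 & v != y3] by split; rewrite eq_sym.
have [ey1a ey1b ey2a ey2d] : [/\ e y1 a, e y1 b', e y2 a & e y2 d] by split; rewrite e_sym.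
have [ey3b ey3d] : e y3 b' /\ e y3 d by split; rewrite e_sym.
have [w [ey1w wa wb]] := exists_third_nbr e_cubic ey1a ey1b ab.
have [aw bw] : a != w /\ b' != w by split; rewrite eq_sym.
have ey2w := adj_remaining_nbr c2_gt1 y12 ey1a eay2 ey1b ey1w ab aw bw nby2.
have ey3w := adj_remaining_nbr c2_gt1 y13 ey1b eby3 ey1a ey1w ba bw aw nay3.
have dw : d != w by apply: contraNneq ndy1 => ->; rewrite e_sym.
have [ewy1 ewy2 ewy3] : [/\ e w y1, e w y2 & e w y3] by split; rewrite e_sym.
suff : #|V| <= size [:: v; a; b'; d; y1; y2; y3; w] by rewrite leqNgt (leq_trans _ V_ge10).
apply: (card_le_nbr_closed (v := v)); first by rewrite inE eqxx.
rewrite /= !andbT; repeat (apply/andP; split).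
- by apply: (nbrs_in_seq eva evb evd) => //; rewrite !inE eqxx ?orbT.
- by apply: (nbrs_in_seq eav eay1 eay2) => //; rewrite !inE eqxx ?orbT.
- by apply: (nbrs_in_seq ebv eby1 eby3) => //; rewrite !inE eqxx ?orbT.
- by apply: (nbrs_in_seq edv edy2 edy3) => //; rewrite !inE eqxx ?orbT.
- by apply: (nbrs_in_seq ey1a ey1b ey1w) => //; rewrite !inE eqxx ?orbT.
- by apply: (nbrs_in_seq ey2a ey2d ey2w) => //; rewrite !inE eqxx ?orbT.
- by apply: (nbrs_in_seq ey3b ey3d ey3w) => //; rewrite !inE eqxx ?orbT.
- by apply: (nbrs_in_seq ewy1 ewy2 ewy3) => //; rewrite !inE eqxx ?orbT.
Qed.

(* Otherwise the graph would be K_{3,3}. *)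
Lemma c2_neq3 : c 2 != 3.
Proof.
apply/eqP => c23.
have /card_gt0P [v _] : 0 < #|V| by rewrite (ltn_trans _ V_gt2).
have [a [b' [d [eva evb evd [ab ad bd]]]]] := exists_nbr3 e_cubic v.
have nbr_a y : y != v -> e a y -> [&& e y a, e y b' & e y d].
  move=> yv eay; have vy : v != y by rewrite eq_sym.
  have card_eq : #|common_nbrs e v y| = #|[set z | e v z]|.
    by rewrite (card_common_nbrs_dist2 vy (no_triangle eva eay) eva eay) c23 e_cubic.
  have common_eq : common_nbrs e v y =i [set z | e v z].
    by apply/(subset_cardP card_eq)/subsetP => z; rewrite /common_nbrs !inE => /andP[].
  have nbr_y z : e v z -> e y z.
    by move=> evz; have := common_eq z; rewrite /common_nbrs !inE evz.
  by rewrite !nbr_y.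
have eav : e a v by rewrite e_sym.
have [y eay yv] := exists_other_nbr e_cubic a v; have vy : v != y by rewrite eq_sym.
have [y' [eay' y'v y'y]] := exists_third_nbr e_cubic eav eay vy.
have [vy' yy'] : v != y' /\ y != y' by split; rewrite eq_sym.
have /and3P[eya eyb eyd] := nbr_a y yv eay.
have /and3P[ey'a ey'b ey'd] := nbr_a y' y'v eay'.
have [eby edy eby' edy'] : [/\ e b' y, e d y, e b' y' & e d y'] by split; rewrite e_sym.
have [ebv edv] : e b' v /\ e d v by split; rewrite e_sym.
suff : #|V| <= size [:: v; a; b'; d; y; y'] by rewrite leqNgt (leq_trans _ V_ge10).
apply: (card_le_nbr_closed (v := v)); first by rewrite inE eqxx.
rewrite /= !andbT; repeat (apply/andP; split).
- by apply: (nbrs_in_seq eva evb evd) => //; rewrite !inE eqxx ?orbT.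
- by apply: (nbrs_in_seq eav eay eay') => //; rewrite !inE eqxx ?orbT.
- by apply: (nbrs_in_seq ebv eby eby') => //; rewrite !inE eqxx ?orbT.
- by apply: (nbrs_in_seq edv edy edy') => //; rewrite !inE eqxx ?orbT.
- by apply: (nbrs_in_seq eya eyb eyd) => //; rewrite !inE eqxx ?orbT.
- by apply: (nbrs_in_seq ey'a ey'b ey'd) => //; rewrite !inE eqxx ?orbT.
Qed.

Lemma cubic_drg_quadrangle_free : quadrangle_free e.
Proof.
move=> x y z z' xy exz eyz exz' eyz'; case: (eqVneq z z') => // zz'; exfalso.
have ezy : e z y by rewrite e_sym.
have c2E := card_common_nbrs_dist2 xy (no_triangle exz ezy) exz ezy.
have c2_gt1 : 1 < c 2.
  by rewrite -c2E; apply/card_gt1P; exists z, z'; rewrite /common_nbrs !inE exz eyz exz' eyz'.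
have c2_le3 : c 2 <= 3.
  by rewrite -c2E -(e_cubic x); apply/subset_leq_card/subsetP => w; rewrite !inE => /andP[].
by move: c2_gt1 c2_le3 c2_neq2 c2_neq3; case: (c 2) => [|[|[|[|n]]]].
Qed.

End CubicDistanceRegular.

Theorem lemma5p3 (V : finType) (e : rel V) :
  simple_graph e -> cubic e -> distance_regular e -> 10 <= #|V| ->
  forall (A : CstarAlgebra) (u : V -> V -> A),
    qaut_relations e u ->
    forall i j k l : V,
      gdist e i k = gdist e j l -> gdist e i k <= 2 ->
      ca_mul (u i j) (u k l) = ca_mul (u k l) (u i j).
Proof.
move=> [e_sym e_irr] e_cubic [e_conn [_ [b [c e_drg]]]] V_ge10 A u uR i j k l d_eq.
have e_quad := cubic_drg_quadrangle_free e_sym e_irr e_cubic e_conn V_ge10 e_drg.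
have V_gt2 : 2 < #|V| by exact: leq_trans V_ge10.
case d_ik: (gdist e i k) d_eq => [|[|[|n]]] d_jl // _.
- by rewrite (gdist_eq0 V_gt2 d_ik) (gdist_eq0 V_gt2 (esym d_jl)).
- by apply: (u_comm_adj e_sym e_cubic e_quad uR); rewrite -(gdist_eq1 e_irr V_gt2) ?d_ik -?d_jl.
- have /and3P[ik _ /existsP[p /andP[eip epk]]] :
    [&& i != k, ~~ e i k & [exists p, e i p && e p k]] by rewrite -gdist_eq2 // d_ik.
  have /and3P[jl _ /existsP[q /andP[ejq eql]]] :
    [&& j != l, ~~ e j l & [exists q, e j q && e q l]] by rewrite -gdist_eq2 // -d_jl.
  exact: (u_comm_dist2 e_sym e_cubic e_quad uR ik jl eip epk ejq eql).
Qed.
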